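(* Let $b>1$ be an integer and let $\mathcal{A}$ be a minimal complete deterministic automaton over $A_b=\{0,\ldots,b-1\}$ whose initial state bears a self-loop labelled by $0$. Let $\ell$ be the number of states of $\mathcal{A}$ that belong to $0$-circuits. Then $\mathcal{A}$ accepts by value a purely periodic set of integers if and only if the following two conditions hold: (a) there exists a pseudo-morphism $\phi:\mathcal{A}\to\mathcal{A}_{?,\ell}$; (b) for all states $s,s'$ of $\mathcal{A}$, if $\phi(s)=\phi(s')$ then $s$ and $s'$ are ultimately-equivalent.
   Context: For $u=u_\ell\cdots u_0\in A_b^*$, $\mathrm{val}(u)=\sum_i u_i b^i$. An automaton accepts by value a set $X\subseteq\mathbb{N}$ if for every word $u$, $u$ is accepted iff $\mathrm{val}(u)\in X$. A set $P\subseteq\mathbb{N}$ is purely periodic if $P=R+p\mathbb{N}$ for some $p\ge1$ and $R\subseteq\{0,\ldots,p-1\}$. For $s$ a state and $u$ a word, $s\cdot u$ denotes the state reached from $s$ by reading $u$. A $0$-circuit is a circuit of the automaton all of whose transitions are labelled by the digit $0$. For an integer $q\ge1$, $\mathcal{A}_{?,q}$ is the deterministic complete automaton over $A_b$ with state set $\mathbb{Z}/q\mathbb{Z}=\{0,\ldots,q-1\}$, initial state $0$, transitions $n\xrightarrow{a}(nb+a)\bmod q$, and no specified final states. A pseudo-morphism between complete deterministic automata $\mathcal{A}\to\mathcal{M}$ is a map $\phi$ from states of $\mathcal{A}$ to states of $\mathcal{M}$ such that $\phi$ maps the initial state to the initial state and, for every state $s$ and letter $a$, $\phi(s\cdot a)=\phi(s)\cdot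 a$ (final states need not be preserved). Two states $s,s'$ are ultimately-equivalent if there exists $m\ge1$ such that $s\cdot u=s'\cdot u$ for every word $u$ with $|u|\ge m$. *)

From mathcomp Require Import all_boot.
Set Implicit Arguments. Unset Strict Implicit. Unset Printing Implicit Defensive.

(* Words are seq 'I_b, read left to right; u = u_l ... u_0 is the list
   [:: u_l; ...; u_0] (most significant digit first). *)

Section Auto.
Variables (b : nat) (Q : finType) (q0 : Q) (delta : Q -> 'I_b -> Q) (F : pred Q).

Definition run (s : Q) (u : seq 'I_b) : Q := foldl delta s u.

Definition valw (u : seq 'I_b) : nat :=
  \sum_(i < size u) nth 0 (map (@nat_of_ord b) (rev u)) i * b ^ i.

Definition accessible : Prop := forall s : Q, exists u, run q0 u = s.
Definition reduced : Prop :=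
  forall s s' : Q, (forall u, F (run s u) = F (run s' u)) -> s = s'.
Definition minimal_dfa : Prop := accessible /\ reduced.

Definition accepts_by_value (X : nat -> Prop) : Prop :=
  forall u : seq 'I_b, F (run q0 u) <-> X (valw u).

Definition on_zero_circuit (s : Q) : Prop :=
  exists u : seq 'I_b, [/\ 0 < size u, all (fun a => nat_of_ord a == 0) u & run s u = s].

Definition ultimately_equivalent (s s' : Q) : Prop :=
  exists m, 1 <= m /\ forall u : seq 'I_b, m <= size u -> run s u = run s' u.

(* pseudo-morphism to A_{?,q} (states Z/qZ = 'I_q, initial 0,
   n --a--> (n b + a) mod q) *)
Definition pseudo_morphism (q : nat) (phi : Q -> 'I_q) : Prop :=
  nat_of_ord (phi q0) = 0 /\
  forall (s : Q) (a : 'I_b), nat_of_ord (phi (delta s a)) = (phi s * b + a) %% q.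

End Auto.

Definition purely_periodic (P : nat -> Prop) : Prop :=
  exists p, 1 <= p /\ exists R : nat -> Prop,
    (forall r, R r -> r < p) /\
    (forall n, P n <-> exists r k, R r /\ n = r + p * k).

From mathcomp Require Import all_boot.
Set Implicit Arguments. Unset Strict Implicit. Unset Printing Implicit Defensive.

(* Since the initial state carries a 0-loop, the state reached on a word only
   depends on its value n; call it state_of n.
   If phi is a pseudo-morphism, then phi (state_of n) = n mod l, and the
   ultimate equivalences hold from a uniform length M on; writing
   n = c b^M + r with r < b^M, the values n and n + l b^M lead to the same state,
   so the accepted set has period l b^M.
   Conversely, if the accepted set has period p, minimality makes state_of
   p-periodic.  Pick B = b^J >= p idempotent modulo p.  The states on 0-circuits
   are exactly the state_of (x B), and state_of (x B) = state_of (y B) iff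
   x = y mod d, where d is the least t > 0 with state_of (t B) = q0; hence there
   are d of them, n mod d only depends on state_of n, and it is a pseudo-morphism
   whose fibres become equal after J letters. *)

Lemma modn_periodic (T : Type) (f : nat -> T) p :
  (forall n, f (n + p) = f n) -> forall n, f n = f (n %% p).
Proof.
move=> f_per n; rewrite {1}(divn_eq n p) addnC.
by elim: (n %/ p) => [|k IH]; rewrite ?addn0 // mulSnr addnA f_per.
Qed.

Lemma purely_periodicP (X : nat -> Prop) p :
  0 < p -> (forall n, X n <-> X (n %% p)) -> purely_periodic X.
Proof.
move=> p_gt0 Xp; exists p; split => //.
exists (fun r => r < p /\ X r); split => [r []//|n].
split=> [/Xp Xn|[r [k [[_ Xr] ->]]]].
  by exists (n %% p), (n %/ p); rewrite addnC mulnC -divn_eq ltn_pmod.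
by apply/(Xp _).2; rewrite addnC mulnC modnMDl; apply/(Xp _).1.
Qed.

Lemma purely_periodic_modn (X : nat -> Prop) :
  purely_periodic X -> exists2 p, 0 < p & forall n, X n <-> X (n %% p).
Proof.
case=> p [p_gt0 [R [R_lt X_def]]]; exists p => // n.
have mod_pk r k : R r -> (r + p * k) %% p = r.
  by move=> Rr; rewrite addnC mulnC modnMDl modn_small ?R_lt.
split=> [/X_def [r [k [Rr ->]]]|/X_def [r [k [Rr e]]]]; apply/X_def.
  by exists r, 0; rewrite mod_pk // muln0 addn0.
exists r, (n %/ p); split => //.
have -> : r = n %% p by rewrite -(mod_pk r k) // -e modn_mod.
by rewrite addnC mulnC -divn_eq.
Qed.

Lemma fin_uniform_bound (T : finType) (P : T -> nat -> Prop) :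
  (forall t m n, m <= n -> P t m -> P t n) ->
  (forall t, exists m, P t m) -> exists m, forall t, P t m.
Proof.
move=> P_mono P_ex.
suff [m Pm] : exists m, forall t, t \in enum T -> P t m.
  by exists m => t; apply: Pm; rewrite mem_enum.
elim: (enum T) => [|t s [m Pm]]; first by exists 0.
have [mt Pmt] := P_ex t.
exists (maxn mt m) => t'; rewrite inE => /predU1P [->|t's].
  exact: P_mono (leq_maxl _ _) Pmt.
exact: P_mono (leq_maxr _ _) (Pm _ t's).
Qed.

Lemma expn_modn_collision b p :
  0 < p -> exists i c, 0 < c /\ b ^ (i + c) = b ^ i %[mod p].
Proof.
move=> p_gt0; pose f (k : 'I_p.+1) : 'I_p := Ordinal (ltn_pmod (b ^ k) p_gt0).
have /injectivePn [x [y x_neq_y /(congr1 val) /= fxy]] : ~~ injectiveb f.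
  by apply/injectiveP => /leq_card; rewrite !card_ord ltnn.
have [lt_xy|lt_yx|/val_inj eq_xy] := ltngtP x y; last by rewrite eq_xy eqxx in x_neq_y.
  by exists x, (y - x); rewrite subn_gt0 (subnKC (ltnW lt_xy)) fxy.
by exists y, (x - y); rewrite subn_gt0 (subnKC (ltnW lt_yx)) fxy.
Qed.

Lemma expn_modn_shift b p i c :
  b ^ (i + c) = b ^ i %[mod p] -> forall k, i <= k -> b ^ (k + c) = b ^ k %[mod p].
Proof.
move=> e k /subnKC <-.
by rewrite addnAC !(expnD b _ (k - i)) -modnMml e modnMml.
Qed.

Lemma expn_modn_idempotent b p : 1 < b -> 0 < p ->
  exists J, [/\ 0 < J, p <= b ^ J & b ^ J * b ^ J = b ^ J %[mod p]].
Proof.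
move=> b_gt1 p_gt0; have [i [c [c_gt0 e]]] := expn_modn_collision b p_gt0.
(* A multiple of the period c of b^k mod p, beyond the preperiod i and above p. *)
pose J := c * (i + p).+1.
have lt_ipJ : i + p < J by rewrite /J leq_pmull.
have shift m : b ^ (J + c * m) = b ^ J %[mod p].
  elim: m => [|m IH]; first by rewrite muln0 addn0.
  rewrite mulnSr addnA (expn_modn_shift e) // (leq_trans (leq_addr p i)) //.
  exact: leq_trans (ltnW lt_ipJ) (leq_addr _ _).
exists J; split; first by rewrite muln_gt0 c_gt0.
  exact: leq_trans (leq_addl i p) (ltnW (leq_trans lt_ipJ (ltnW (ltn_expl J b_gt1)))).
by rewrite -expnD shift.
Qed.

Section Automata.
Variable b : nat.
Hypothesis b_gt1 : 1 < b.
Let b_gt0 : 0 < b := ltnW b_gt1.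

Lemma valw_nil : valw (b := b) [::] = 0.
Proof. by rewrite /valw big_ord0. Qed.

Lemma valw_rcons (u : seq 'I_b) (a : 'I_b) : valw (rcons u a) = valw u * b + a.
Proof.
rewrite /valw size_rcons big_ord_recl rev_rcons /= expn0 muln1 addnC big_distrl.
by congr (_ + _); apply: eq_bigr => i _; rewrite expnSr mulnA.
Qed.

Lemma valw_cat (u v : seq 'I_b) : valw (u ++ v) = valw u * b ^ size v + valw v.
Proof.
elim/last_ind: v => [|v a IH]; first by rewrite cats0 valw_nil muln1 addn0.
by rewrite -rcons_cat !valw_rcons IH size_rcons expnSr mulnDl !mulnA addnA.
Qed.

Lemma valw_lt (u : seq 'I_b) : valw u < b ^ size u.
Proof.
elim/last_ind: u => [|u a IH]; first by rewrite valw_nil.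
rewrite valw_rcons size_rcons expnSr.
apply: (@leq_trans (valw u * b + b)); first by rewrite ltn_add2l.
by rewrite -mulSnr leq_mul2r IH orbT.
Qed.

Lemma valw_zeros (u : seq 'I_b) :
  all (fun a : 'I_b => nat_of_ord a == 0) u -> valw u = 0.
Proof.
elim/last_ind: u => [|u a IH]; first by rewrite valw_nil.
by rewrite all_rcons => /andP [/eqP a0 /IH u0]; rewrite valw_rcons u0 a0.
Qed.

Fixpoint word_of (k n : nat) : seq 'I_b :=
  if k is k'.+1 then rcons (word_of k' (n %/ b)) (Ordinal (ltn_pmod n b_gt0))
  else [::].

Lemma size_word_of k n : size (word_of k n) = k.
Proof. by elim: k n => [|k IH] n //=; rewrite size_rcons IH. Qed.

Lemma valw_word_of k n : n < b ^ k -> valw (word_of k n) = n.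
Proof.
elim: k n => [|k IH] n /=; first by rewrite ltnS leqn0 => /eqP ->; rewrite valw_nil.
move=> n_lt; rewrite valw_rcons IH /= -?divn_eq //.
by rewrite ltn_divLR // -expnSr.
Qed.

Lemma word_of_valw (u : seq 'I_b) : word_of (size u) (valw u) = u.
Proof.
elim/last_ind: u => [//|u a IH].
rewrite size_rcons /= valw_rcons divnMDl // divn_small // addn0 IH.
by congr rcons; apply: val_inj; rewrite /= modnMDl modn_small.
Qed.

Lemma word_of_addn k j n : word_of (k + j) n = word_of k (n %/ b ^ j) ++ word_of j n.
Proof.
elim: j n => [|j IH] n; first by rewrite addn0 divn1 cats0.
by rewrite addnS /= IH rcons_cat expnS divnMA.
Qed.

Lemma word_of0_zeros k : all (fun a : 'I_b => nat_of_ord a == 0) (word_of k 0).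
Proof. by elim: k => [|k IH] //=; rewrite all_rcons /= mod0n div0n IH. Qed.

Section ZeroLoop.
Variables (Q : finType) (q0 : Q) (delta : Q -> 'I_b -> Q).
Hypothesis q0_zero_loop : forall a : 'I_b, nat_of_ord a = 0 -> delta q0 a = q0.

Lemma run_cat s u v : run delta s (u ++ v) = run delta (run delta s u) v.
Proof. exact: foldl_cat. Qed.

Lemma run_rcons s u a : run delta s (rcons u a) = delta (run delta s u) a.
Proof. exact: foldl_rcons. Qed.

Lemma run_q0_zeros u : all (fun a : 'I_b => nat_of_ord a == 0) u -> run delta q0 u = q0.
Proof.
elim/last_ind: u => [//|u a IH]; rewrite all_rcons => /andP [/eqP a0 /IH u0].
by rewrite run_rcons u0 q0_zero_loop.
Qed.

Definition state_of n := run delta q0 (word_of n n).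

Lemma state_of0 : state_of 0 = q0.
Proof. by []. Qed.

Lemma run_q0_word_of k j n : n < b ^ j ->
  run delta q0 (word_of (k + j) n) = run delta q0 (word_of j n).
Proof.
by move=> n_lt; rewrite word_of_addn divn_small // run_cat run_q0_zeros ?word_of0_zeros.
Qed.

Lemma run_q0 u : run delta q0 u = state_of (valw u).
Proof.
rewrite /state_of -{1}(word_of_valw u) -(run_q0_word_of (valw u)) ?valw_lt //.
by rewrite addnC run_q0_word_of // ltn_expl.
Qed.

Lemma run_state_of x v : run delta (state_of x) v = state_of (x * b ^ size v + valw v).
Proof. by rewrite /state_of -run_cat run_q0 valw_cat valw_word_of // ltn_expl. Qed.

Lemma state_of_split c k r : r < b ^ k ->
  state_of (c * b ^ k + r) = run delta (state_of c) (word_of k r).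
Proof. by move=> r_lt; rewrite run_state_of size_word_of valw_word_of. Qed.

Lemma delta_state_of x a : delta (state_of x) a = state_of (x * b + a).
Proof. by have := run_state_of x [:: a]; rewrite (valw_rcons [::]) valw_nil. Qed.

Lemma run_state_of_zeros x u : all (fun a : 'I_b => nat_of_ord a == 0) u ->
  run delta (state_of x) u = state_of (x * b ^ size u).
Proof. by move=> u0; rewrite run_state_of valw_zeros ?addn0. Qed.

Section PeriodicOfMorphism.
Variables (l : nat) (phi : Q -> 'I_l).
Hypothesis phi_pm : pseudo_morphism q0 delta phi.
Hypothesis phi_ue : forall s s', phi s = phi s' -> ultimately_equivalent delta s s'.

Lemma phi_run_q0 u : nat_of_ord (phi (run delta q0 u)) = valw u %% l.
Proof.
case: phi_pm => phi_q0 phi_delta.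
elim/last_ind: u => [|u a IH]; first by rewrite phi_q0 valw_nil mod0n.
rewrite run_rcons phi_delta IH valw_rcons.
by rewrite -modnDml modnMml modnDml.
Qed.

Lemma uniformly_ultimately_equivalent : exists M, forall s s', phi s = phi s' ->
  forall u, M <= size u -> run delta s u = run delta s' u.
Proof.
pose P (ss : Q * Q) m := phi ss.1 = phi ss.2 ->
  forall u, m <= size u -> run delta ss.1 u = run delta ss.2 u.
have [ss m n le_mn Pm e u le_nu|[s s']|M HM] := @fin_uniform_bound _ P.
- exact: Pm (leq_trans le_mn le_nu).
- have [/phi_ue [m [_ Hm]]|ne] := eqVneq (phi s) (phi s'); first by exists m => _ /=.
  by exists 0 => e; rewrite e eqxx in ne.
by exists M => s s'; apply: (HM (s, s')).
Qed.

Lemma state_of_periodic : exists2 P, 0 < P & forall n, state_of (n + P) = state_of n.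
Proof.
have l_gt0 : 0 < l by case: (phi q0) => i /(leq_ltn_trans (leq0n i)).
have [M HM] := uniformly_ultimately_equivalent.
have BM_gt0 : 0 < b ^ M by rewrite expn_gt0 b_gt0.
exists (l * b ^ M) => [|n]; first by rewrite muln_gt0 l_gt0.
have r_lt : n %% b ^ M < b ^ M by rewrite ltn_pmod.
rewrite {1 2}(divn_eq n (b ^ M)) addnAC -mulnDl !state_of_split //.
apply: HM; last by rewrite size_word_of.
apply: val_inj; rewrite /= /state_of !phi_run_q0 !valw_word_of ?modnDr //.
all: exact: ltn_expl.
Qed.

Lemma periodic_of_morphism (F : pred Q) :
  exists X, purely_periodic X /\ accepts_by_value q0 delta F X.
Proof.
have [P P_gt0 P_per] := state_of_periodic.
exists (fun n => F (state_of n)); split; last by move=> u; rewrite run_q0.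
by apply: (purely_periodicP P_gt0) => n; rewrite -(modn_periodic P_per).
Qed.

End PeriodicOfMorphism.

Lemma state_of_modn_of_accepts (F : pred Q) (X : nat -> Prop) p :
  reduced delta F -> accepts_by_value q0 delta F X ->
  (forall n, X n <-> X (n %% p)) ->
  forall x y, x = y %[mod p] -> state_of x = state_of y.
Proof.
move=> F_red FX Xp x y exy; apply: F_red => v.
have FX_state_of n : F (state_of n) <-> X n.
  by have := FX (word_of n n); rewrite (valw_word_of (ltn_expl n b_gt1)).
have e : x * b ^ size v + valw v = y * b ^ size v + valw v %[mod p].
  by rewrite -modnDml -modnMml exy modnMml modnDml.
rewrite !run_state_of; apply/idP/idP => /FX_state_of /(Xp _).1.
  by rewrite e => /(Xp _).2 /FX_state_of.
by rewrite -e => /(Xp _).2 /FX_state_of.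
Qed.

Section MorphismOfPeriodic.
Variables p J : nat.
Hypothesis Q_accessible : accessible q0 delta.
Hypothesis p_gt0 : 0 < p.
Hypothesis state_of_modn : forall x y, x = y %[mod p] -> state_of x = state_of y.
Hypothesis J_gt0 : 0 < J.
Hypothesis p_le_bJ : p <= b ^ J.
Hypothesis bJ_idem : b ^ J * b ^ J = b ^ J %[mod p].
Local Notation B := (b ^ J).

Lemma state_of_onto s : exists x, state_of x = s.
Proof. by have [u <-] := Q_accessible s; exists (valw u); rewrite run_q0. Qed.

Lemma state_of_MDl m n : state_of (p * m + n) = state_of n.
Proof. by apply: state_of_modn; rewrite mulnC modnMDl. Qed.

Lemma mulnBB_mod z : z * B * B = z * B %[mod p].
Proof. by rewrite -mulnA -modnMmr bJ_idem modnMmr. Qed.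

Lemma expB_mod m : 0 < m -> B ^ m = B %[mod p].
Proof.
case: m => // m _; elim: m => [|m IH]; first by rewrite expn1.
by rewrite expnS -modnMmr IH modnMmr bJ_idem.
Qed.

Lemma run_state_of_zerosJ x : run delta (state_of x) (word_of J 0) = state_of (x * B).
Proof. by rewrite run_state_of_zeros ?word_of0_zeros ?size_word_of. Qed.

Lemma state_ofB_shift w x y : state_of (x * B) = state_of (y * B) ->
  state_of (w + x * B) = state_of (w + y * B).
Proof.
(* w + z B = z B B + (w mod p) modulo p, and w mod p < B is read as J digits after z B. *)
have r_lt : w %% p < B := leq_trans (ltn_pmod w p_gt0) p_le_bJ.
have e z : w + z * B = z * B * B + w %% p %[mod p].
  by rewrite modnDmr -[RHS]modnDml mulnBB_mod modnDml addnC.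
by move=> exy; rewrite !(state_of_modn (e _)) !state_of_split // exy.
Qed.

Definition trivial_shift t : bool := state_of (t * B) == q0.

Lemma trivial_shiftP t w : trivial_shift t -> state_of (w + t * B) = state_of w.
Proof. by move=> /eqP tB; rewrite (@state_ofB_shift w t 0) ?addn0 // tB. Qed.

Lemma trivial_shift0 : trivial_shift 0.
Proof. by rewrite /trivial_shift mul0n state_of0. Qed.

Lemma trivial_shiftD t s : trivial_shift t -> trivial_shift s -> trivial_shift (t + s).
Proof. by move=> tB sB; rewrite /trivial_shift mulnDl addnC trivial_shiftP. Qed.

Lemma trivial_shiftDr t s : trivial_shift t -> trivial_shift (s + t) = trivial_shift s.
Proof. by move=> tB; rewrite /trivial_shift mulnDl trivial_shiftP. Qed.

Lemma trivial_shift_p : trivial_shift p.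
Proof. by rewrite /trivial_shift -[p * B]addn0 state_of_MDl state_of0. Qed.

Lemma exists_trivial_shift : exists t, (0 < t) && trivial_shift t.
Proof. by exists p; rewrite p_gt0 trivial_shift_p. Qed.

Definition shift_period := ex_minn exists_trivial_shift.
Local Notation d := shift_period.

Lemma shift_period_gt0 : 0 < d.
Proof. by rewrite /d; case: ex_minnP => ? /andP []. Qed.

Lemma trivial_shift_dvd t : trivial_shift t = (d %| t).
Proof.
rewrite /d; case: ex_minnP => per /andP [per_gt0 perB] per_min.
have mulB k : trivial_shift (k * per).
  by elim: k => [|k IH]; rewrite ?trivial_shift0 // mulSnr trivial_shiftD.
rewrite [in LHS](divn_eq t per) addnC trivial_shiftDr // /dvdn.
have [->|r_gt0] := posnP (t %% per); first exact: trivial_shift0.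
apply/negP => rB.
by have := per_min (t %% per); rewrite /= r_gt0 rB leqNgt ltn_pmod // => /(_ isT).
Qed.

Lemma eq_state_ofB x y : (state_of (x * B) == state_of (y * B)) = (x == y %[mod d]).
Proof.
wlog le_xy : x y / x <= y.
  by move=> wlog_le; case/orP: (leq_total x y) => /wlog_le; rewrite // eq_sym => ->.
rewrite [RHS]eq_sym eqn_mod_dvd // -trivial_shift_dvd -{1 2}(subnKC le_xy) addKn.
move: (y - x) => t {le_xy y}; apply/eqP/idP => [eB|tB]; last first.
  by rewrite mulnDl trivial_shiftP.
(* Shifting by (p - 1) x B turns x B into 0 modulo p. *)
have e1 : p.-1 * (x * B) + x * B = p * (x * B) + 0 by rewrite addn0 -mulSnr prednK.
have e2 : p.-1 * (x * B) + (x + t) * B = p * (x * B) + t * B.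
  by rewrite mulnDl addnA -mulSnr prednK.
have := state_ofB_shift (p.-1 * (x * B)) eB.
by rewrite e1 e2 !state_of_MDl state_of0 => /esym/eqP.
Qed.

Lemma state_of_eq_mod x y : state_of x = state_of y -> x = y %[mod d].
Proof. by move=> e; apply/eqP; rewrite -eq_state_ofB -!run_state_of_zerosJ e. Qed.

Lemma on_zero_circuitP s : on_zero_circuit delta s <-> exists x, s = state_of (x * B).
Proof.
split=> [[u [u_gt0 u0 us]]|[x ->]].
  have [x xs] := state_of_onto s; subst s.
  have iter m : state_of (x * b ^ (size u * m)) = state_of x.
    elim: m => [|m IH]; first by rewrite muln0 muln1.
    by rewrite mulnSr expnD mulnA -run_state_of_zeros // IH us.
  exists x; rewrite -{1}(iter J) [size u * J]mulnC expnM; apply: state_of_modn.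
  by rewrite -modnMmr expB_mod // modnMmr.
exists (word_of J 0); split; rewrite ?size_word_of ?word_of0_zeros //.
by rewrite run_state_of_zerosJ; apply: state_of_modn; apply: mulnBB_mod.
Qed.

Lemma card_zero_circuit (S : {set Q}) :
  (forall s, s \in S <-> on_zero_circuit delta s) -> #|S| = d.
Proof.
move=> S_def.
have -> : S = [set state_of (x * B) | x : 'I_d].
  apply/setP => s; apply/idP/imsetP => [/S_def/on_zero_circuitP [x ->]|[x _ ->]].
    exists (Ordinal (ltn_pmod x shift_period_gt0)) => //.
    by apply/eqP; rewrite eq_state_ofB modn_mod.
  by apply/S_def/on_zero_circuitP; exists x.
rewrite card_imset ?card_ord // => x y /eqP.
by rewrite eq_state_ofB !modn_small // => /eqP /val_inj.
Qed.

(* The default value is never used: every state is some state_of x with x < p. *)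
Definition residue (s : Q) : 'I_d :=
  if [pick x : 'I_p | state_of x == s] is Some x
  then Ordinal (ltn_pmod x shift_period_gt0) else Ordinal shift_period_gt0.

Lemma residue_state_of x : nat_of_ord (residue (state_of x)) = x %% d.
Proof.
rewrite /residue; case: pickP => /= [y /eqP /state_of_eq_mod //|none].
by have := none (Ordinal (ltn_pmod x p_gt0)); rewrite /= (state_of_modn (modn_mod x p)) eqxx.
Qed.

Lemma residue_pseudo_morphism : pseudo_morphism q0 delta residue.
Proof.
split=> [|s a]; first by rewrite -state_of0 residue_state_of mod0n.
have [x <-] := state_of_onto s.
by rewrite delta_state_of !residue_state_of -[RHS]modnDml modnMml modnDml.
Qed.

Lemma residue_ultimately_equivalent s s' :
  residue s = residue s' -> ultimately_equivalent delta s s'.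
Proof.
have [x <-] := state_of_onto s; have [y <-] := state_of_onto s'.
move=> /(congr1 val); rewrite /= !residue_state_of => exy.
exists J; split => // u le_Ju.
rewrite !run_state_of -(subnK le_Ju) expnD !mulnA ![_ * B + _]addnC.
apply: state_ofB_shift; apply/eqP.
by rewrite eq_state_ofB -modnMml exy modnMml.
Qed.

End MorphismOfPeriodic.

Lemma morphism_of_periodic (F : pred Q) (X : nat -> Prop) (S : {set Q}) :
  minimal_dfa q0 delta F -> purely_periodic X -> accepts_by_value q0 delta F X ->
  (forall s, s \in S <-> on_zero_circuit delta s) ->
  exists phi : Q -> 'I_#|S|, pseudo_morphism q0 delta phi /\
    forall s s', phi s = phi s' -> ultimately_equivalent delta s s'.
Proof.
move=> [Q_acc Q_red] /purely_periodic_modn [p p_gt0 Xp] FX S_def.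
have [J [J_gt0 p_le_bJ bJ_idem]] := expn_modn_idempotent b_gt1 p_gt0.
have periodic := state_of_modn_of_accepts Q_red FX Xp.
rewrite (card_zero_circuit Q_acc p_gt0 periodic J_gt0 p_le_bJ bJ_idem S_def).
by eexists; split; [apply: residue_pseudo_morphism | apply: residue_ultimately_equivalent].
Qed.

End ZeroLoop.
End Automata.

Theorem theorem24 (b : nat) (Q : finType) (q0 : Q) (delta : Q -> 'I_b -> Q)
    (F : pred Q) (l : nat) :
  1 < b ->
  minimal_dfa q0 delta F ->
  (forall a : 'I_b, nat_of_ord a = 0 -> delta q0 a = q0) ->
  (* l = number of states lying on 0-circuits *)
  (exists S : {set Q}, (forall s, s \in S <-> on_zero_circuit delta s) /\ #|S| = l) ->
  (exists X : nat -> Prop, purely_periodic X /\ accepts_by_value q0 delta F X)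
  <->
  (exists phi : Q -> 'I_l,
     pseudo_morphism q0 delta phi /\
     (forall s s' : Q, phi s = phi s' -> ultimately_equivalent delta s s')).
Proof.
move=> b_gt1 Q_min q0_loop [S [S_def <-]]; split.
  by case=> X [X_per FX]; exact: (morphism_of_periodic b_gt1 q0_loop Q_min X_per FX S_def).
by case=> phi [phi_pm phi_ue]; exact: (periodic_of_morphism b_gt1 q0_loop phi_pm phi_ue F).
Qed.
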